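(* Let $V=\{\mathbf{v}_1,\dots,\mathbf{v}_m\}$ and $\tilde V=\{\tilde{\mathbf{v}}_1,\dots,\tilde{\mathbf{v}}_m\}$ be subsets of $\mathbb{R}^\ell$ whose open convex hulls are given by $\mathrm{Co}(V)=\{\mathbf{x}:A\mathbf{x}\prec\mathbf{b}\}$ and $\mathrm{Co}(\tilde V)=\{\mathbf{x}:\tilde A\mathbf{x}\prec\tilde{\mathbf{b}}\}$, where the rows of $A$ and $\tilde A$ are unit vectors. Let $\varepsilon>0$. If $\mathbf{x}\in\mathbb{R}^\ell$ satisfies $A\mathbf{x}\prec\mathbf{b}-\varepsilon\mathbf{1}$ and $\|\mathbf{v}_i-\tilde{\mathbf{v}}_i\|_2<\varepsilon$ for all $i$, then $\tilde A\mathbf{x}\prec\tilde{\mathbf{b}}$.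
   Context: $\prec$ denotes strict entrywise inequality of vectors and $\mathbf{1}$ the all-ones vector of the appropriate size. $\mathrm{Co}(S)$ denotes the open convex hull (interior of the convex hull) of $S$. *)

From mathcomp Require Import all_boot all_order all_algebra.
From mathcomp Require Import reals.
Set Implicit Arguments. Unset Strict Implicit. Unset Printing Implicit Defensive.
Import Order.TTheory GRing.Theory Num.Theory.
Local Open Scope ring_scope.

Definition norm2 (R : realType) (l : nat) (x : 'cV[R]_l) : R :=
  Num.sqrt (\sum_(j < l) x j 0 ^+ 2).

Definition convhull (R : realType) (l m : nat) (V : 'I_m -> 'cV[R]_l)
    (y : 'cV[R]_l) : Prop :=
  exists w : 'I_m -> R,
    (forall i, 0 <= w i) /\ \sum_(i < m) w i = 1 /\ y = \sum_(i < m) w i *: V i.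

(* Open convex hull Co(V): interior (Euclidean topology) of the convex hull. *)
Definition open_convhull (R : realType) (l m : nat) (V : 'I_m -> 'cV[R]_l)
    (x : 'cV[R]_l) : Prop :=
  exists r : R, 0 < r /\
    forall y : 'cV[R]_l, norm2 (y - x) < r -> convhull V y.

Definition vlt (R : realType) (k : nat) (u v : 'cV[R]_k) : Prop :=
  forall i, u i 0 < v i 0.

Definition unit_rows (R : realType) (k l : nat) (A : 'M[R]_(k, l)) : Prop :=
  forall i, norm2 (row i A)^T = 1.

From mathcomp Require Import all_boot all_order all_algebra.
From mathcomp Require Import reals.
From mathcomp Require Import ring lra.
Import Order.TTheory GRing.Theory Num.Theory.
Local Open Scope ring_scope.
Set Implicit Arguments. Unset Strict Implicit.

(* For a unit vector u, the point x + eps u still satisfies A y < b, hence is a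
   convex combination of the v_i; the same combination of the perturbed
   vertices is a point z of conv(Vt) with u.x < u.z.  Applied to u and -u this
   forbids the vertices of Vt from lying in a hyperplane, so their differences
   span R^l and the barycenter of Vt is interior: Co(Vt) is nonempty.  Every
   point of conv(Vt) is then a limit of points of Co(Vt), so each inequality
   of At y < bt holds weakly on conv(Vt); taking u a row of At gives
   (At x)_i < (At z)_i <= bt_i. *)

Section EuclideanDot.
Variables (R : realType) (l : nat).
Implicit Types (u v w : 'cV[R]_l).

Definition dot u v : R := (u^T *m v) 0 0.

Lemma dotE u v : dot u v = \sum_j u j 0 * v j 0.
Proof. by rewrite /dot mxE; apply: eq_bigr => j _; rewrite mxE. Qed.

Lemma dotC u v : dot u v = dot v u.
Proof. by rewrite !dotE; apply: eq_bigr => j _; rewrite mulrC. Qed.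

Lemma dotDr u v w : dot u (v + w) = dot u v + dot u w.
Proof. by rewrite /dot mulmxDr mxE. Qed.

Lemma dotZr u a v : dot u (a *: v) = a * dot u v.
Proof. by rewrite /dot -scalemxAr mxE. Qed.

Lemma dotNr u v : dot u (- v) = - dot u v.
Proof. by rewrite -scaleN1r dotZr mulN1r. Qed.

Lemma dotBr u v w : dot u (v - w) = dot u v - dot u w.
Proof. by rewrite dotDr dotNr. Qed.

Lemma dotZl u a v : dot (a *: v) u = a * dot v u.
Proof. by rewrite !(dotC _ u) dotZr. Qed.

Lemma dotBl u v w : dot (v - w) u = dot v u - dot w u.
Proof. by rewrite !(dotC _ u) dotBr. Qed.

Lemma dotNl u v : dot (- v) u = - dot v u.
Proof. by rewrite !(dotC _ u) dotNr. Qed.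

Lemma dot0l u : dot 0 u = 0.
Proof. by rewrite /dot trmx0 mul0mx mxE. Qed.

Lemma dot_sumr m u (c : 'I_m -> R) (F : 'I_m -> 'cV[R]_l) :
  dot u (\sum_i c i *: F i) = \sum_i c i * dot u (F i).
Proof.
by rewrite /dot mulmx_sumr summxE; apply: eq_bigr => i _; rewrite -scalemxAr mxE.
Qed.

Lemma mulmx_row_dot k (A : 'M[R]_(k, l)) y i : (A *m y) i 0 = dot (row i A)^T y.
Proof. by rewrite /dot trmxK -row_mul [RHS]mxE. Qed.

Lemma dotvv_ge0 u : 0 <= dot u u.
Proof. by rewrite dotE; apply: sumr_ge0 => j _; rewrite -expr2 sqr_ge0. Qed.

Lemma dotvv_eq0 u : (dot u u == 0) = (u == 0).
Proof.
apply/idP/eqP => [|->]; last by rewrite dot0l.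
rewrite dotE psumr_eq0 => [/allP u0|j _]; last by rewrite -expr2 sqr_ge0.
apply/matrixP => j k; rewrite (ord1 k) mxE.
by have /implyP/(_ isT) := u0 j (mem_index_enum j); rewrite mulf_eq0 orbb => /eqP.
Qed.

Lemma norm2E u : norm2 u = Num.sqrt (dot u u).
Proof. by rewrite /norm2 dotE; under eq_bigr do rewrite expr2. Qed.

Lemma sqr_norm2 u : norm2 u ^+ 2 = dot u u.
Proof. by rewrite norm2E sqr_sqrtr ?dotvv_ge0. Qed.

Lemma norm2_ge0 u : 0 <= norm2 u.
Proof. by rewrite norm2E sqrtr_ge0. Qed.

Lemma norm2_eq0 u : (norm2 u == 0) = (u == 0).
Proof. by rewrite norm2E sqrtr_eq0 -dotvv_eq0 eq_le dotvv_ge0 andbT. Qed.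

Lemma norm2_0 : norm2 (0 : 'cV[R]_l) = 0.
Proof. by apply/eqP; rewrite norm2_eq0. Qed.

Lemma norm2Z a u : norm2 (a *: u) = `|a| * norm2 u.
Proof. by rewrite !norm2E dotZl dotZr mulrA -expr2 sqrtrM ?sqr_ge0 ?sqrtr_sqr. Qed.

Lemma norm2N u : norm2 (- u) = norm2 u.
Proof. by rewrite -scaleN1r norm2Z normrN1 mul1r. Qed.

Lemma cauchy_schwarz u v : dot u v <= norm2 u * norm2 v.
Proof.
have [->|u0] := eqVneq u 0; first by rewrite dot0l mulr_ge0 ?norm2_ge0.
have [->|v0] := eqVneq v 0; first by rewrite dotC dot0l mulr_ge0 ?norm2_ge0.
have ab : 0 < norm2 u * norm2 v.
  by rewrite mulr_gt0 // lt_def ?norm2_eq0 ?u0 ?v0 norm2_ge0.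
have := dotvv_ge0 (norm2 v *: u - norm2 u *: v).
rewrite !(dotBl, dotBr, dotZl, dotZr) (dotC v u) -!sqr_norm2.
move: ab; set a := norm2 u; set b := norm2 v; set c := dot u v; nra.
Qed.

Lemma coord_le_norm2 u j : `|u j 0| <= norm2 u.
Proof.
rewrite norm2E -sqrtr_sqr ler_sqrt ?dotvv_ge0 // dotE (bigD1 j) //= expr2 lerDl.
by apply: sumr_ge0 => i _; rewrite -expr2 sqr_ge0.
Qed.

End EuclideanDot.

Lemma ler_of_convex_ltr (R : realFieldType) (c d e : R) :
  (forall t, 0 < t <= 1 -> (1 - t) * c + t * d < e) -> c <= e.
Proof.
move=> lt_e; apply/ler_addgt0Pr => delta delta_gt0.
set t := delta / (`|c - d| + delta).
have den_gt0 : 0 < `|c - d| + delta by rewrite ltr_wpDl.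
have t_gt0 : 0 < t by rewrite divr_gt0.
have t_le1 : t <= 1 by rewrite ler_pdivrMr // mul1r lerDr.
have t_dist : t * `|c - d| <= delta.
  by rewrite mulrAC ler_pdivrMr // ler_pM2l // lerDl ltW.
have := lt_e t; rewrite t_gt0 t_le1 => /(_ isT).
have := ler_norm (c - d); nra.
Qed.

Section ConvexHull.
Variables (R : realType) (l m : nat) (V : 'I_m -> 'cV[R]_l).

Lemma convex_weight_gt0 (w : 'I_m -> R) :
  (forall i, 0 <= w i) -> \sum_i w i = 1 -> exists i, 0 < w i.
Proof.
move=> w_ge0 w_sum.
have sum_neq0 : \sum_i w i <> 0 by rewrite w_sum; apply/eqP; exact: oner_neq0.
by have [i /andP[_ w_gt0]] := psumr_neq0P (fun i _ => w_ge0 i) sum_neq0; exists i.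
Qed.

Lemma convex_sum_ltr (w F G : 'I_m -> R) :
    (forall i, 0 <= w i) -> \sum_i w i = 1 -> (forall i, F i < G i) ->
  \sum_i w i * F i < \sum_i w i * G i.
Proof.
move=> w_ge0 w_sum ltFG; have [i w_gt0] := convex_weight_gt0 w_ge0 w_sum.
rewrite (bigD1 i) //= [ltRHS](bigD1 i) //=; apply: ltr_leD; first by rewrite ltr_pM2l.
by apply: ler_sum => j _; apply: ler_wpM2l => //; exact: ltW.
Qed.

Lemma open_convhull_sub x : open_convhull V x -> convhull V x.
Proof. by move=> [r [r_gt0 ball_r]]; apply: ball_r; rewrite subrr norm2_0. Qed.

Lemma convhull_convex y z t :
  convhull V y -> convhull V z -> 0 <= t <= 1 -> convhull V ((1 - t) *: y + t *: z).
Proof.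
move=> [wy [wy_ge0 [wy_sum ->]]] [wz [wz_ge0 [wz_sum ->]]] /andP[t_ge0 t_le1].
exists (fun i => (1 - t) * wy i + t * wz i); split; [|split].
- by move=> i; rewrite addr_ge0 // mulr_ge0 // subr_ge0.
- by rewrite big_split /= -!mulr_sumr wy_sum wz_sum !mulr1 subrK.
- rewrite !scaler_sumr -big_split /=; apply: eq_bigr => i _.
  by rewrite !scalerA -scalerDl.
Qed.

Lemma convhull_dot_const u c y :
  (forall i, dot u (V i) = c) -> convhull V y -> dot u y = c.
Proof.
move=> uV [w [_ [w_sum ->]]]; rewrite dot_sumr.
by under eq_bigr do rewrite uV; rewrite -mulr_suml w_sum mul1r.
Qed.

Lemma open_convhull_segment y p t :
    convhull V y -> open_convhull V p -> 0 < t <= 1 ->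
  open_convhull V ((1 - t) *: y + t *: p).
Proof.
move=> hy [r [r_gt0 ball_r]] /andP[t_gt0 t_le1]; set z := _ + _.
exists (t * r); split => [|y' y'z]; first by rewrite mulr_gt0.
have hp' : convhull V (p + t^-1 *: (y' - z)).
  apply: ball_r; rewrite (addrC p) addrK norm2Z ger0_norm ?invr_ge0 ?ltW //.
  by rewrite mulrC ltr_pdivrMr // mulrC.
have -> : y' = (1 - t) *: y + t *: (p + t^-1 *: (y' - z)).
  by apply/matrixP => j k; rewrite !mxE; field; rewrite gt_eqF.
by apply: convhull_convex; rewrite // (ltW t_gt0).
Qed.

Lemma convhull_dot_le u c p y :
    open_convhull V p -> (forall z, open_convhull V z -> dot u z < c) ->
  convhull V y -> dot u y <= c.
Proof.
move=> hp lt_c hy; apply: (@ler_of_convex_ltr _ _ (dot u p)) => t t01.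
by have := lt_c _ (open_convhull_segment hy hp t01); rewrite dotDr !dotZr.
Qed.

End ConvexHull.

Lemma convhull_perturb_dot_gt (R : realType) (l m : nat) (V Vt : 'I_m -> 'cV[R]_l)
    (eps : R) u y :
    (forall i, norm2 (V i - Vt i) < eps) -> norm2 u <= 1 -> convhull V y ->
  exists2 z, convhull Vt z & dot u y - eps < dot u z.
Proof.
move=> close u_le1 [w [w_ge0 [w_sum ->]]].
exists (\sum_i w i *: Vt i); first by exists w.
have dot_close i : dot u (V i) - eps < dot u (Vt i).
  have := cauchy_schwarz u (V i - Vt i); rewrite dotBr.
  have := close i; have := norm2_ge0 u; have := norm2_ge0 (V i - Vt i); nra.
rewrite !dot_sumr -[eps]mul1r -w_sum mulr_suml -sumrB.
under eq_bigr do rewrite -mulrBr.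
exact: convex_sum_ltr.
Qed.

Lemma vlt_mulmx_ball (R : realType) (k l : nat) (A : 'M[R]_(k, l)) b eps x y :
    unit_rows A -> vlt (A *m x) (b - eps *: const_mx 1) -> norm2 (y - x) <= eps ->
  vlt (A *m y) b.
Proof.
move=> unitA ltx yx i; have := ltx i; rewrite !mulmx_row_dot !mxE mulr1.
have := cauchy_schwarz (row i A)^T (y - x); rewrite unitA mul1r dotBr; lra.
Qed.

Lemma open_convhull_perturb_dot_gt (R : realType) (l m k : nat)
    (V Vt : 'I_m -> 'cV[R]_l) (A : 'M[R]_(k, l)) (b : 'cV[R]_k) (eps : R) x u :
    unit_rows A -> (forall y, vlt (A *m y) b -> open_convhull V y) ->
    vlt (A *m x) (b - eps *: const_mx 1) ->
    0 <= eps -> (forall i, norm2 (V i - Vt i) < eps) -> norm2 u = 1 ->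
  exists2 z, convhull Vt z & dot u x < dot u z.
Proof.
move=> unitA hCo ltx eps_ge0 close u1.
have ux_eps : dot u (x + eps *: u) - eps = dot u x.
  by rewrite dotDr dotZr -sqr_norm2 u1 expr1n mulr1 addrK.
have : convhull V (x + eps *: u).
  apply/open_convhull_sub/hCo/(vlt_mulmx_ball unitA ltx).
  by rewrite addrAC subrr add0r norm2Z u1 mulr1 ger0_norm.
have u_le1 : norm2 u <= 1 by rewrite u1.
by case/(convhull_perturb_dot_gt close u_le1) => z hz; rewrite ux_eps; exists z.
Qed.

Lemma unit_vector_in_kernel (R : realType) (k l : nat) (D : 'M[R]_(k, l)) :
  ~~ row_full D -> exists2 u, norm2 u = 1 & D *m u = 0.
Proof.
move=> D_not_full; have /rowV0Pn[v /sub_kermxP vD v_neq0] : kermx D^T != 0.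
  by rewrite kermx_eq0 /row_free mxrank_tr.
have nv_gt0 : 0 < norm2 v^T by rewrite lt_def norm2_eq0 trmx_eq0 v_neq0 norm2_ge0.
exists ((norm2 v^T)^-1 *: v^T).
  by rewrite norm2Z ger0_norm ?invr_ge0 ?ltW // mulVf ?gt_eqF.
by rewrite -scalemxAr -[D]trmxK -trmx_mul vD trmx0 scaler0.
Qed.

Section VertexDifferences.
Variables (R : realType) (l m : nat) (V : 'I_m -> 'cV[R]_l) (i0 : 'I_m).

Definition vertex_diff_mx : 'M[R]_(m, l) := \matrix_i (V i - V i0)^T.

Definition barycenter : 'cV[R]_l := \sum_i m%:R^-1 *: V i.

Let m_gt0 : 0 < m%:R :> R.
Proof. by rewrite ltr0n (leq_ltn_trans _ (ltn_ord i0)). Qed.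

Lemma convhull_near_barycenter (a : 'I_m -> R) :
    \sum_i `|a i| <= (2 * m%:R)^-1 ->
  convhull V (barycenter + \sum_i a i *: (V i - V i0)).
Proof.
move=> a_small; set S := \sum_i a i.
have S_small : `|S| <= (2 * m%:R)^-1 := le_trans (ler_norm_sum _ _ _) a_small.
have inv_m : m%:R^-1 = 2 * (2 * m%:R)^-1 :> R by field; rewrite gt_eqF.
exists (fun i => m%:R^-1 + a i - (if i == i0 then S else 0)); split; [|split].
- move=> i; have /ler_normlP[_ S_le] := S_small.
  have /ler_normlP[ai_ge _] : `|a i| <= (2 * m%:R)^-1.
    by apply: le_trans a_small; rewrite (bigD1 i) //= lerDl sumr_ge0.
  have t_ge0 : 0 <= (2 * m%:R)^-1 :> R := le_trans (normr_ge0 S) S_small.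
  by case: (i == i0) => /=; lra.
- rewrite sumrB big_split /= -big_mkcond big_pred1_eq sumr_const card_ord.
  by rewrite -[_ *+ m]mulr_natr mulVf ?addrK // gt_eqF.
- have delta : \sum_i (if i == i0 then S else 0) *: V i = S *: V i0.
    by rewrite (bigD1 i0) //= eqxx big1 ?addr0 // => i /negPf ->; rewrite scale0r.
  under eq_bigr do rewrite scalerBr.
  under [RHS]eq_bigr do rewrite scalerBl scalerDl.
  by rewrite !sumrB big_split /= delta -scaler_suml addrA.
Qed.

Lemma row_full_open_convhull_barycenter :
  row_full vertex_diff_mx -> open_convhull V barycenter.
Proof.
move=> /row_fullP[B BD].
set C := \sum_i \sum_j `|B j i|.
have C_ge0 : 0 <= C by do 2!apply: sumr_ge0 => ? _.
set r := (2 * m%:R * (C + 1))^-1.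
have r_gt0 : 0 < r by rewrite invr_gt0 !mulr_gt0 // ltr_wpDl.
exists r; split => // y yr; set q := y - barycenter in yr.
set a := fun i => (q^T *m B) 0 i.
have q_comb : q = \sum_i a i *: (V i - V i0).
  apply: trmx_inj; rewrite -[q^T]mulmx1 -BD mulmxA mulmx_sum_row linear_sum.
  by apply: eq_bigr => i _; rewrite rowK linearZ.
have a_le i : `|a i| <= norm2 q * \sum_j `|B j i|.
  rewrite /a mxE mulr_sumr; apply: le_trans (ler_norm_sum _ _ _) _.
  by apply: ler_sum => j _; rewrite mxE normrM ler_wpM2r ?coord_le_norm2.
have -> : y = barycenter + \sum_i a i *: (V i - V i0) by rewrite -q_comb addrC subrK.
apply/convhull_near_barycenter/(le_trans (ler_sum _ (fun i _ => a_le i))).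
rewrite -mulr_sumr -/C.
have rC : r * (C + 1) = (2 * m%:R)^-1.
  by rewrite /r; field; rewrite !gt_eqF ?ltr_wpDl.
have := norm2_ge0 q; nra.
Qed.

Lemma row_full_vertex_diff_mx x :
    (forall u, norm2 u = 1 -> exists2 z, convhull V z & dot u x < dot u z) ->
  row_full vertex_diff_mx.
Proof.
move=> dot_gt; apply/negPn/negP => /unit_vector_in_kernel[u u1 Du0].
have uV i : dot u (V i) = dot u (V i0).
  have := congr1 (fun M : 'M[R]_(m, 1) => M i 0) Du0.
  rewrite /= mulmx_row_dot rowK trmxK mxE dotC dotBr => /eqP.
  by rewrite subr_eq0 => /eqP.
have [z1 hz1] := dot_gt u u1; rewrite (convhull_dot_const uV hz1) => lt1.
have [z2 hz2] := dot_gt (- u) (etrans (norm2N u) u1).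
by rewrite !dotNl (convhull_dot_const uV hz2) ltrN2 => /(lt_trans lt1); rewrite ltxx.
Qed.

End VertexDifferences.

Theorem lemma12 (R : realType) (l m k kt : nat)
    (V Vt : 'I_m -> 'cV[R]_l)
    (A : 'M[R]_(k, l)) (b : 'cV[R]_k)
    (At : 'M[R]_(kt, l)) (bt : 'cV[R]_kt)
    (hA : unit_rows A) (hAt : unit_rows At)
    (hCo : forall x, open_convhull V x <-> vlt (A *m x) b)
    (hCot : forall x, open_convhull Vt x <-> vlt (At *m x) bt)
    (eps : R) (heps : 0 < eps) (x : 'cV[R]_l)
    (hx : vlt (A *m x) (b - eps *: const_mx 1))
    (hclose : forall i, norm2 (V i - Vt i) < eps) :
  vlt (At *m x) bt.
Proof.
have x_in : open_convhull V x.
  by apply/hCo => i; apply: lt_le_trans (hx i) _; rewrite !mxE mulr1 lerBlDr lerDl ltW.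
have [w [w_ge0 [w_sum _]]] := open_convhull_sub x_in.
have [i0 _] := convex_weight_gt0 w_ge0 w_sum.
have dot_gt u : norm2 u = 1 -> exists2 z, convhull Vt z & dot u x < dot u z.
  exact: open_convhull_perturb_dot_gt hA (fun y => (hCo y).2) hx (ltW heps) hclose.
have p_in := row_full_open_convhull_barycenter (row_full_vertex_diff_mx i0 dot_gt).
move=> i; have [z hz lt_xz] := dot_gt _ (hAt i).
rewrite mulmx_row_dot; apply: lt_le_trans lt_xz (convhull_dot_le p_in _ hz).
by move=> y /hCot /(_ i); rewrite mulmx_row_dot.
Qed.
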